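(* Let $N\ge 4$ be even, $p<0$, and let $0\le r_1<\dots<r_N\le 1$ be distinct points. Define $\sigma\in S_N$ by $$\sigma(i)=\begin{cases}1 & i=1,\\ \frac N2-i+3 & i \text{ even},\ i\le \frac N2+1,\\ N-i+3 & i\text{ odd},\ 1<i\le\frac N2+1,\\ i-\frac N2 & i\text{ even},\ i>\frac N2+1,\\ i & i\text{ odd},\ i>\frac N2+1.\end{cases}$$ Let $\tau\in S_N$ be the cyclic shift $\tau(i)=i+1$ for $i\le N-1$, $\tau(N)=1$, and set $\sigma_k=\tau^k\circ\sigma$ for $k=1,\dots,N$. Then an optimal Hamiltonian cycle is among the cycles $h_k^*=h[\sigma_k]$, $k=1,\dots,N$; i.e. $\min_{k}E(h[\sigma_k])\le E(h)$ for every Hamiltonian cycle $h$ of $\mathcal K_N$.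
   Context: The points are the vertices of the complete graph $\mathcal K_N$. For $p\in\mathbb R$ the weight of the edge $\{r_i,r_j\}$ is $w_{ij}=|r_i-r_j|^p$, and the cost of a Hamiltonian cycle $h$ is $E(h)=\sum_{e\in h}w_e$. For $\sigma\in S_N$, $h[\sigma]$ denotes the Hamiltonian cycle with edges $\{r_{\sigma(i)},r_{\sigma(i+1)}\}$, $i=1,\dots,N$, with $\sigma(N+1):=\sigma(1)$. *)

(* real numbers with real exponent (Rpower). Vertices are
   indexed 1..N; points r : nat -> R (only r 1 .. r N matter). *)
From Stdlib Require Import Reals Lra Lia Arith List.
Open Scope R_scope.

Definition sum1 (N : nat) (f : nat -> R) : R :=
  fold_right Rplus 0 (map f (seq 1 N)).

Definition nxt (N i : nat) : nat := if Nat.eqb i N then 1%nat else S i.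

(* pi is a permutation of {1,..,N} (values outside 1..N are irrelevant) *)
Definition is_perm (N : nat) (pi : nat -> nat) : Prop :=
  (forall i, (1 <= i <= N)%nat -> (1 <= pi i <= N)%nat) /\
  (forall i j, (1 <= i <= N)%nat -> (1 <= j <= N)%nat -> pi i = pi j -> i = j).

Definition weight (r : nat -> R) (p : R) (i j : nat) : R :=
  Rpower (Rabs (r i - r j)) p.

(* E(h[sigma]) = sum_{i=1}^N w_{sigma(i) sigma(i+1)}, sigma(N+1) := sigma(1) *)
Definition cost (N : nat) (r : nat -> R) (p : R) (sigma : nat -> nat) : R :=
  sum1 N (fun i => weight r p (sigma i) (sigma (nxt N i))).

Definition sigma0 (N : nat) (i : nat) : nat :=
  if Nat.eqb i 1 then 1%nat
  else if Nat.leb i (N / 2 + 1) then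
    (if Nat.even i then (N / 2 + 3 - i)%nat else (N + 3 - i)%nat)
  else
    (if Nat.even i then (i - N / 2)%nat else i).

Definition tau (N : nat) (i : nat) : nat := nxt N i.

Definition sigma_k (N k : nat) (i : nat) : nat := Nat.iter k (tau N) (sigma0 N i).

(* Write the weight of an edge {u < v} as the telescoping sum, over the intervals [a,b] that
   contain u and v, of the second differences
     om(a,b) = w(a,b) - w(a-1,b) - w(a,b+1) + w(a-1,b+1)
   (w extended by 0 outside 1..N). The cost of any cycle then becomes the sum of om(a,b) times
   the number of its edges inside [a,b], and om >= 0 because d |-> d^p is positive, decreasing
   and convex for p < 0.
   With N = 2n, every edge of h[sigma_k] joins indices n-1 to n+1 apart. Hence it has no edge
   inside an interval of fewer than n indices, the least possible number 2m - N inside one of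
   m > n indices (none outside it), and at most one inside a window of exactly n indices.
   A cycle with no edge inside such a window alternates between the window and its complement;
   this happens for at most one window, or for the two halves together, and a suitable rotation
   sigma_k avoids that window as well. So every cycle is beaten by some sigma_k, hence by the
   best of them. *)

From Stdlib Require Import Reals Arith.
From Stdlib Require Import Lra Lia List Permutation Classical.
Open Scope bool_scope.
Open Scope R_scope.

Ltac case_nat_tests := repeat match goal with
  | |- context [Nat.leb ?x ?y] => destruct (Nat.leb_spec x y)
  | |- context [Nat.eqb ?x ?y] => destruct (Nat.eqb_spec x y)
  end.

Definition lsum (l : list nat) (f : nat -> R) : R := fold_right Rplus 0 (map f l).

Ltac sum1_to_lsum :=
  unfold sum1 in *; repeat change (fold_right Rplus 0 (map ?f ?l)) with (lsum l f) in *.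

Lemma lsum_cons x l f : lsum (x :: l) f = f x + lsum l f.
Proof. reflexivity. Qed.

Lemma lsum_app l1 l2 f : lsum (l1 ++ l2) f = lsum l1 f + lsum l2 f.
Proof.
  induction l1 as [|x l1 IH]; simpl; [unfold lsum; simpl; lra|].
  rewrite !lsum_cons, IH; lra.
Qed.

Lemma lsum_ext l f g : (forall x, In x l -> f x = g x) -> lsum l f = lsum l g.
Proof.
  induction l as [|x l IH]; intros H; [reflexivity|].
  rewrite !lsum_cons, H, IH; simpl; auto.
  intros y Hy; apply H; simpl; auto.
Qed.

Lemma lsum_eq0 l f : (forall x, In x l -> f x = 0) -> lsum l f = 0.
Proof.
  induction l as [|x l IH]; intros H; [reflexivity|].
  rewrite lsum_cons, H, IH; simpl; auto; [lra|].
  intros y Hy; apply H; simpl; auto.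
Qed.

Lemma lsum_le l f g : (forall x, In x l -> f x <= g x) -> lsum l f <= lsum l g.
Proof.
  induction l as [|x l IH]; intros H; [unfold lsum; simpl; lra|].
  rewrite !lsum_cons.
  assert (f x <= g x) by (apply H; simpl; auto).
  assert (lsum l f <= lsum l g) by (apply IH; intros; apply H; simpl; auto).
  lra.
Qed.

Lemma lsum_plus l f g : lsum l (fun x => f x + g x) = lsum l f + lsum l g.
Proof.
  induction l as [|x l IH]; [unfold lsum; simpl; lra|].
  rewrite !lsum_cons, IH; lra.
Qed.

Lemma lsum_minus l f g : lsum l (fun x => f x - g x) = lsum l f - lsum l g.
Proof.
  induction l as [|x l IH]; [unfold lsum; simpl; lra|].
  rewrite !lsum_cons, IH; lra.
Qed.

Lemma lsum_const l c : lsum l (fun _ => c) = INR (length l) * c.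
Proof.
  induction l as [|x l IH]; [unfold lsum; simpl; lra|].
  rewrite lsum_cons, IH; cbn [length]; rewrite S_INR; lra.
Qed.

Lemma lsum_scal l c f : lsum l (fun x => c * f x) = c * lsum l f.
Proof.
  induction l as [|x l IH]; [unfold lsum; simpl; lra|].
  rewrite !lsum_cons, IH; lra.
Qed.

Lemma lsum_swap l1 l2 F :
  lsum l1 (fun x => lsum l2 (fun y => F x y)) = lsum l2 (fun y => lsum l1 (fun x => F x y)).
Proof.
  induction l1 as [|x l1 IH].
  - symmetry; apply lsum_eq0; reflexivity.
  - rewrite lsum_cons, IH, <- lsum_plus.
    apply lsum_ext; intros; reflexivity.
Qed.

Lemma lsum_map l g f : lsum (map g l) f = lsum l (fun x => f (g x)).
Proof. unfold lsum; rewrite map_map; reflexivity. Qed.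

Lemma lsum_Permutation l l' f : Permutation l l' -> lsum l f = lsum l' f.
Proof. induction 1; unfold lsum in *; simpl in *; lra. Qed.

Lemma lsum_telescope (H : nat -> R) v m :
  lsum (seq v m) (fun b => H b - H (S b)) = H v - H (v + m)%nat.
Proof.
  revert v; induction m as [|m IH]; intros v.
  - rewrite Nat.add_0_r; unfold lsum; simpl; lra.
  - simpl seq; rewrite lsum_cons, IH.
    replace (S v + m)%nat with (v + S m)%nat by lia; lra.
Qed.

Lemma lsum_telescope_pred (H : nat -> R) m :
  lsum (seq 1 m) (fun a => H a - H (a - 1)%nat) = H m - H 0%nat.
Proof.
  induction m as [|m IH]; [unfold lsum; simpl; lra|].
  rewrite seq_S, lsum_app, IH.
  unfold lsum at 1; simpl.
  replace (m - 0)%nat with m by lia; lra.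
Qed.

Definition indic (b : bool) : R := if b then 1 else 0.

Definition in_range (lo hi x : nat) : bool := (lo <=? x)%nat && (x <=? hi)%nat.

Lemma in_range_true lo hi x : in_range lo hi x = true <-> (lo <= x <= hi)%nat.
Proof. unfold in_range; rewrite Bool.andb_true_iff, !Nat.leb_le; tauto. Qed.

Lemma in_range_false lo hi x : in_range lo hi x = false <-> ~ (lo <= x <= hi)%nat.
Proof. rewrite <- in_range_true; destruct (in_range lo hi x); intuition congruence. Qed.

Lemma lsum_indic l g : lsum l (fun t => indic (g t)) = INR (length (filter g l)).
Proof.
  induction l as [|x l IH]; [reflexivity|].
  rewrite lsum_cons, IH; unfold indic; cbn [filter].
  destruct (g x); cbn [length]; [rewrite S_INR|]; lra.
Qed.

Lemma sum1_indic_ge0 N g : 0 <= sum1 N (fun t => indic (g t)).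
Proof. change (0 <= lsum (seq 1 N) (fun t => indic (g t))); rewrite lsum_indic; apply pos_INR. Qed.

Lemma sum1_indic_eq0 N g :
  sum1 N (fun t => indic (g t)) = 0 <-> forall t, (1 <= t <= N)%nat -> g t = false.
Proof.
  change (lsum (seq 1 N) (fun t => indic (g t)) = 0 <->
    forall t, (1 <= t <= N)%nat -> g t = false); split.
  - rewrite lsum_indic; intros H t Ht.
    destruct (g t) eqn:E; auto.
    assert (In t (filter g (seq 1 N))) by (apply filter_In; split; auto; apply in_seq; lia).
    destruct (filter g (seq 1 N)); [contradiction|].
    cbn [length] in H; rewrite S_INR in H; pose proof (pos_INR (length l)); lra.
  - intros H; apply lsum_eq0; intros t Ht; apply in_seq in Ht.
    rewrite H by lia; reflexivity.
Qed.

Lemma sum1_indic_eq0_or_ge1 N g :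
  sum1 N (fun t => indic (g t)) = 0 \/ 1 <= sum1 N (fun t => indic (g t)).
Proof.
  change (lsum (seq 1 N) (fun t => indic (g t)) = 0 \/ 1 <= lsum (seq 1 N) (fun t => indic (g t))).
  rewrite lsum_indic; destruct (length (filter g (seq 1 N))) as [|k]; [left; reflexivity|right].
  rewrite S_INR; pose proof (pos_INR k); lra.
Qed.

Lemma length_filter_le1 (g : nat -> bool) l : NoDup l ->
  (forall t1 t2, In t1 l -> In t2 l -> g t1 = true -> g t2 = true -> t1 = t2) ->
  (length (filter g l) <= 1)%nat.
Proof.
  intros Hnd H; destruct (filter g l) as [|x [|y l']] eqn:E; simpl; try lia.
  assert (Hx : In x (filter g l)) by (rewrite E; simpl; auto).
  assert (Hy : In y (filter g l)) by (rewrite E; simpl; auto).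
  apply filter_In in Hx, Hy.
  assert (x = y) by (apply H; tauto); subst y.
  assert (Hnd' := NoDup_filter g Hnd); rewrite E in Hnd'.
  inversion Hnd'; simpl in *; tauto.
Qed.

Lemma sum1_indic_le1 N g :
  (forall t1 t2, (1 <= t1 <= N)%nat -> (1 <= t2 <= N)%nat -> g t1 = true -> g t2 = true -> t1 = t2) ->
  sum1 N (fun t => indic (g t)) <= 1.
Proof.
  intros H; change (lsum (seq 1 N) (fun t => indic (g t)) <= 1); rewrite lsum_indic.
  replace 1 with (INR 1) by reflexivity; apply le_INR, length_filter_le1; [apply seq_NoDup|].
  intros t1 t2 H1 H2; apply in_seq in H1, H2; apply H; lia.
Qed.

Lemma sum1_window N lo hi f : (1 <= lo)%nat -> (lo <= S hi)%nat -> (hi <= N)%nat ->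
  sum1 N (fun x => indic (in_range lo hi x) * f x) = lsum (seq lo (S hi - lo)) f.
Proof.
  intros H1 H2 H3; unfold sum1; fold (lsum (seq 1 N) (fun x => indic (in_range lo hi x) * f x)).
  replace N with ((lo - 1) + ((S hi - lo) + (N - hi)))%nat at 1 by lia.
  rewrite !seq_app, !lsum_app.
  replace (1 + (lo - 1))%nat with lo by lia.
  rewrite (lsum_eq0 (seq 1 _)), (lsum_eq0 (seq (lo + _) _)).
  - rewrite Rplus_0_l, Rplus_0_r; apply lsum_ext; intros x Hx; apply in_seq in Hx.
    replace (in_range lo hi x) with true by (symmetry; apply in_range_true; lia).
    unfold indic; lra.
  - intros x Hx; apply in_seq in Hx.
    replace (in_range lo hi x) with false by (symmetry; apply in_range_false; lia).
    unfold indic; lra.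
  - intros x Hx; apply in_seq in Hx.
    replace (in_range lo hi x) with false by (symmetry; apply in_range_false; lia).
    unfold indic; lra.
Qed.

Lemma is_perm_Permutation N s : is_perm N s -> Permutation (map s (seq 1 N)) (seq 1 N).
Proof.
  intros [Hr Hi]; apply Permutation_map_same_l.
  - apply FinFun.Injective_map_NoDup_in; [|apply seq_NoDup].
    intros x y Hx Hy; apply in_seq in Hx, Hy; apply Hi; lia.
  - intros y Hy; apply in_map_iff in Hy; destruct Hy as [x [<- Hx]]; apply in_seq in Hx.
    apply in_seq; specialize (Hr x ltac:(lia)); lia.
Qed.

Lemma sum1_perm N s g : is_perm N s -> sum1 N (fun t => g (s t)) = sum1 N g.
Proof.
  intros Hs; change (lsum (seq 1 N) (fun t => g (s t)) = lsum (seq 1 N) g).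
  rewrite <- lsum_map; apply lsum_Permutation, is_perm_Permutation, Hs.
Qed.

Lemma is_perm_surj N s v : is_perm N s -> (1 <= v <= N)%nat ->
  exists t, (1 <= t <= N)%nat /\ s t = v.
Proof.
  intros Hs Hv.
  assert (Hin : In v (map s (seq 1 N))).
  { eapply Permutation_in; [symmetry; apply is_perm_Permutation, Hs|apply in_seq; lia]. }
  apply in_map_iff in Hin; destruct Hin as [t [E Ht]]; apply in_seq in Ht.
  exists t; split; [lia|exact E].
Qed.

Lemma is_perm_comp N s1 s2 : is_perm N s1 -> is_perm N s2 -> is_perm N (fun t => s1 (s2 t)).
Proof.
  intros [R1 I1] [R2 I2]; split; intros.
  - apply R1, R2; auto.
  - apply I2, I1; auto.
Qed.

Lemma nxt_range N i : (1 <= i <= N)%nat -> (1 <= nxt N i <= N)%nat.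
Proof. unfold nxt; case_nat_tests; lia. Qed.

Lemma nxt_is_perm N : is_perm N (nxt N).
Proof. split; [apply nxt_range|]. intros i j Hi Hj; unfold nxt; case_nat_tests; lia. Qed.

Lemma is_perm_edge_neq N s t : (2 <= N)%nat -> is_perm N s -> (1 <= t <= N)%nat ->
  s t <> s (nxt N t).
Proof.
  intros HN [Hr Hi] Ht E; apply Hi in E; [|lia|apply nxt_range; lia].
  revert E; unfold nxt; case_nat_tests; lia.
Qed.

(** * Negative powers *)

Section NegativePower.

Variable p : R.
Hypothesis hp : p < 0.

Lemma Rpower_neg_antitone x y : 0 < x -> x <= y -> Rpower y p <= Rpower x p.
Proof.
  intros hx hxy; destruct (Rle_lt_or_eq_dec _ _ hxy) as [Hlt|<-]; [|lra].
  unfold Rpower; left; apply exp_increasing.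
  assert (ln x < ln y) by (apply ln_increasing; auto); nra.
Qed.

(* Scaling by [s = y/x >= 1] multiplies [y^p - (y+l)^p] by [s^p <= 1] and shrinks [l] to [l/s]. *)
Lemma Rpower_neg_diff_antitone x y l : 0 < x -> x <= y -> 0 < l ->
  Rpower y p - Rpower (y + l) p <= Rpower x p - Rpower (x + l) p.
Proof.
  intros hx hxy hl; set (s := y / x).
  assert (hs : 1 <= s) by (unfold s; apply (Rmult_le_reg_r x); auto; field_simplify; lra).
  assert (hls : 0 < l / s) by (apply Rdiv_lt_0_compat; lra).
  assert (Ey : y = s * x) by (unfold s; field; lra).
  assert (Eyl : y + l = s * (x + l / s)) by (rewrite Ey; field; lra).
  rewrite Eyl, Ey, <- !Rpower_mult_distr by lra.
  assert (Hsp : Rpower s p <= 1).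
  { replace 1 with (Rpower 1 p) by (unfold Rpower; rewrite ln_1, Rmult_0_r; apply exp_0).
    apply Rpower_neg_antitone; lra. }
  assert (Hsp0 : 0 < Rpower s p) by apply exp_pos.
  assert (A1 : Rpower (x + l) p <= Rpower (x + l / s) p).
  { apply Rpower_neg_antitone; [lra|].
    assert (l / s <= l) by (apply (Rmult_le_reg_r s); [lra|field_simplify; nra]); lra. }
  assert (A2 : Rpower (x + l / s) p <= Rpower x p) by (apply Rpower_neg_antitone; lra).
  nra.
Qed.

End NegativePower.

(** * Monge decomposition of the cost *)

Section MongeDecomposition.

Variables (N : nat) (W : nat -> nat -> R).

(* [W] extended by zero outside [1 <= a], [b <= N], so that the telescoping sums close up. *)
Definition ext0 (a b : nat) : R := if (1 <=? a)%nat && (b <=? N)%nat then W a b else 0.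

Definition monge (a b : nat) : R :=
  ext0 a b - ext0 (a - 1) b - ext0 a (S b) + ext0 (a - 1) (S b).

Lemma monge_decomp u v : (1 <= u)%nat -> (u <= v)%nat -> (v <= N)%nat ->
  W u v = sum1 N (fun a => sum1 N (fun b => monge a b * indic (in_range a b u && in_range a b v))).
Proof.
  intros Hu Huv Hv.
  assert (Hinner : forall a, In a (seq 1 N) ->
    sum1 N (fun b => monge a b * indic (in_range a b u && in_range a b v)) =
    indic (in_range 1 u a) * (ext0 a v - ext0 (a - 1) v)).
  { intros a Ha; apply in_seq in Ha.
    transitivity (indic (in_range 1 u a) * sum1 N (fun b => indic (in_range v N b) * monge a b)).
    { sum1_to_lsum; rewrite <- lsum_scal; apply lsum_ext; intros b Hb; apply in_seq in Hb.
      unfold in_range, indic; case_nat_tests; simpl; try lra; lia. }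
    rewrite sum1_window by lia; f_equal.
    unfold monge; rewrite (lsum_ext _ _ (fun b => (fun b => ext0 a b - ext0 (a - 1) b) b -
      (fun b => ext0 a b - ext0 (a - 1) b) (S b))) by (intros; lra).
    rewrite lsum_telescope; replace (v + (S N - v))%nat with (S N) by lia.
    unfold ext0 at 3 4; replace (S N <=? N)%nat with false by (symmetry; apply Nat.leb_gt; lia).
    rewrite !Bool.andb_false_r; lra. }
  change (W u v = lsum (seq 1 N) (fun a => sum1 N (fun b =>
    monge a b * indic (in_range a b u && in_range a b v)))).
  rewrite (lsum_ext _ _ _ Hinner).
  change (W u v = sum1 N (fun a => indic (in_range 1 u a) * (ext0 a v - ext0 (a - 1) v))).
  rewrite (sum1_window N 1 u (fun a => ext0 a v - ext0 (a - 1) v)) by lia.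
  replace (S u - 1)%nat with u by lia.
  rewrite (lsum_telescope_pred (fun a => ext0 a v)).
  unfold ext0; case_nat_tests; simpl; lia || lra.
Qed.

Definition inner_edges (s : nat -> nat) (a b : nat) : R :=
  sum1 N (fun t => indic (in_range a b (s t) && in_range a b (s (nxt N t)))).

Definition outer_edges (s : nat -> nat) (a b : nat) : R :=
  sum1 N (fun t => indic (negb (in_range a b (s t)) && negb (in_range a b (s (nxt N t))))).

Hypothesis W_sym : forall u v, W u v = W v u.

Lemma cycle_sum_monge s : (forall t, (1 <= t <= N)%nat -> (1 <= s t <= N)%nat) ->
  sum1 N (fun t => W (s t) (s (nxt N t))) =
  sum1 N (fun a => sum1 N (fun b => monge a b * inner_edges s a b)).
Proof.
  intros Hs.
  transitivity (sum1 N (fun t => sum1 N (fun a => sum1 N (fun b =>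
    monge a b * indic (in_range a b (s t) && in_range a b (s (nxt N t))))))).
  { apply lsum_ext; intros t Ht; apply in_seq in Ht.
    assert (Hu := Hs t ltac:(lia)); assert (Hv := Hs _ (nxt_range N t ltac:(lia))).
    destruct (Nat.le_ge_cases (s t) (s (nxt N t))).
    - apply monge_decomp; lia.
    - rewrite W_sym, monge_decomp by lia.
      apply lsum_ext; intros; apply lsum_ext; intros; rewrite Bool.andb_comm; reflexivity. }
  unfold inner_edges; sum1_to_lsum.
  rewrite lsum_swap; apply lsum_ext; intros a _.
  rewrite lsum_swap; apply lsum_ext; intros b _.
  rewrite lsum_scal; reflexivity.
Qed.

End MongeDecomposition.

Section MongeNonneg.

Variables (N : nat) (f : R -> R) (r : nat -> R).
Hypothesis f_ge0 : forall d, 0 < d -> 0 <= f d.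
Hypothesis f_antitone : forall d d', 0 < d -> d <= d' -> f d' <= f d.
Hypothesis f_diff_antitone : forall d d' l, 0 < d -> d <= d' -> 0 < l ->
  f d' - f (d' + l) <= f d - f (d + l).
Hypothesis r_incr : forall i j, (1 <= i)%nat -> (i < j)%nat -> (j <= N)%nat -> r i < r j.

Lemma monge_dist_ge0 a b : (1 <= a)%nat -> (a < b)%nat -> (b <= N)%nat ->
  0 <= monge N (fun u v => f (Rabs (r u - r v))) a b.
Proof.
  intros Ha Hab Hb.
  assert (D : forall i j, (1 <= i)%nat -> (i < j)%nat -> (j <= N)%nat ->
    Rabs (r i - r j) = r j - r i).
  { intros i j Hi Hij Hj; rewrite Rabs_left; [ring|].
    specialize (r_incr i j Hi Hij Hj); lra. }
  assert (Hxy := r_incr a b Ha Hab Hb).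
  unfold monge, ext0; case_nat_tests; simpl; try lia; rewrite ?D by lia.
  - assert (Hx := r_incr (a - 1) a ltac:(lia) ltac:(lia) ltac:(lia)).
    assert (Hy := r_incr b (S b) ltac:(lia) ltac:(lia) ltac:(lia)).
    replace (r b - r (a - 1)%nat) with (r b - r a + (r a - r (a - 1)%nat)) by ring.
    replace (r (S b) - r (a - 1)%nat) with (r (S b) - r a + (r a - r (a - 1)%nat)) by ring.
    assert (K := f_diff_antitone (r b - r a) (r (S b) - r a) (r a - r (a - 1)%nat)
      ltac:(lra) ltac:(lra) ltac:(lra)).
    lra.
  - assert (Hx := r_incr (a - 1) a ltac:(lia) ltac:(lia) ltac:(lia)).
    assert (K := f_antitone (r b - r a) (r b - r (a - 1)%nat) ltac:(lra) ltac:(lra)); lra.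
  - assert (Hy := r_incr b (S b) ltac:(lia) ltac:(lia) ltac:(lia)).
    assert (K := f_antitone (r b - r a) (r (S b) - r a) ltac:(lra) ltac:(lra)); lra.
  - assert (K := f_ge0 (r b - r a) ltac:(lra)); lra.
Qed.

End MongeNonneg.

(** * Edges of a Hamiltonian cycle inside an interval *)

Lemma sum1_indic_range N a b : (1 <= a)%nat -> (a <= S b)%nat -> (b <= N)%nat ->
  sum1 N (fun x => indic (in_range a b x)) = INR (S b - a).
Proof.
  intros Ha Hab Hb.
  transitivity (sum1 N (fun x => indic (in_range a b x) * 1)).
  { apply lsum_ext; intros; lra. }
  rewrite sum1_window, lsum_const, length_seq by lia; lra.
Qed.

Lemma inner_sub_outer_edges N s a b : is_perm N s ->
  (1 <= a)%nat -> (a <= S b)%nat -> (b <= N)%nat ->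
  inner_edges N s a b - outer_edges N s a b = 2 * INR (S b - a) - INR N.
Proof.
  intros Hs Ha Hab Hb.
  assert (Hcount : forall s', is_perm N s' -> sum1 N (fun t => indic (in_range a b (s' t))) = INR (S b - a)).
  { intros s' Hs'; rewrite (sum1_perm N s' (fun x => indic (in_range a b x))) by exact Hs'.
    apply sum1_indic_range; lia. }
  assert (C1 := Hcount s Hs).
  assert (C2 := Hcount _ (is_perm_comp N s (nxt N) Hs (nxt_is_perm N))).
  unfold inner_edges, outer_edges; sum1_to_lsum.
  rewrite <- lsum_minus.
  rewrite (lsum_ext _ _ (fun t => indic (in_range a b (s t)) + indic (in_range a b (s (nxt N t))) - 1)).
  - rewrite lsum_minus, lsum_plus, C1, C2, lsum_const, length_seq; lra.
  - intros t _; unfold indic.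
    destruct (in_range a b (s t)), (in_range a b (s (nxt N t))); simpl; lra.
Qed.

Lemma inner_edges_empty N s a b : (2 <= N)%nat -> is_perm N s -> (b <= a)%nat ->
  inner_edges N s a b = 0.
Proof.
  intros HN Hs Hab; apply sum1_indic_eq0; intros t Ht.
  assert (E := is_perm_edge_neq N s t HN Hs Ht).
  destruct (in_range a b (s t)) eqn:E1, (in_range a b (s (nxt N t))) eqn:E2; auto.
  apply in_range_true in E1, E2; lia.
Qed.

Lemma nxt_nxt_neq N t : (3 <= N)%nat -> (1 <= t <= N)%nat -> nxt N (nxt N t) <> t.
Proof. intros HN Ht; unfold nxt; destruct (Nat.eqb_spec t N); case_nat_tests; lia. Qed.

(* A cycle on at least three vertices uses a given edge at most once. *)
Lemma inner_edges_le1 N s a b : (3 <= N)%nat -> is_perm N s ->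
  (forall t, (1 <= t <= N)%nat ->
    in_range a b (s t) && in_range a b (s (nxt N t)) = true ->
    (s t = a /\ s (nxt N t) = b) \/ (s t = b /\ s (nxt N t) = a)) ->
  inner_edges N s a b <= 1.
Proof.
  intros HN Hs H; apply sum1_indic_le1; intros t1 t2 T1 T2 G1 G2.
  destruct Hs as [Hr Hi].
  assert (N1 := nxt_range N t1 T1); assert (N2 := nxt_range N t2 T2).
  destruct (H t1 T1 G1) as [[A1 B1]|[A1 B1]], (H t2 T2 G2) as [[A2 B2]|[A2 B2]];
    try (apply Hi; auto; congruence).
  all: assert (E1 : t1 = nxt N t2) by (apply Hi; auto; congruence).
  all: assert (E2 : t2 = nxt N t1) by (apply Hi; auto; congruence).
  all: exfalso; apply (nxt_nxt_neq N t2 HN T2); congruence.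
Qed.

Lemma cycle_invariant N s (g : nat -> bool) :
  (forall t, (1 <= t <= N)%nat -> g (s (nxt N t)) = g (s t)) ->
  forall t, (1 <= t <= N)%nat -> g (s t) = g (s 1%nat).
Proof.
  intros Hg t Ht; induction t as [|t IH]; [lia|].
  destruct (Nat.eq_dec t 0) as [->|Ht0]; [reflexivity|].
  rewrite <- IH by lia; replace (S t) with (nxt N t) by (unfold nxt; case_nat_tests; lia).
  apply Hg; lia.
Qed.

Section Windows.

Variables (N n : nat).
Hypothesis HN : N = (2 * n)%nat.
Hypothesis Hn : (2 <= n)%nat.

Lemma INR_N_half : INR N = 2 * INR n.
Proof. rewrite HN, mult_INR; reflexivity. Qed.

(* An edge inside [1..n] is an edge outside [n+1..N], and a window of half size has as many
   inner as outer edges. *)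
Lemma inner_edges_halves s : is_perm N s -> inner_edges N s 1 n = inner_edges N s (n + 1) N.
Proof.
  intros Hs.
  assert (E : inner_edges N s 1 n = outer_edges N s (n + 1) N).
  { apply lsum_ext; intros t Ht; apply in_seq in Ht; destruct Hs as [Hr _].
    assert (R1 := Hr t ltac:(lia)); assert (R2 := Hr _ (nxt_range N t ltac:(lia))).
    unfold in_range; case_nat_tests; simpl; reflexivity || lia. }
  assert (F := inner_sub_outer_edges N s (n + 1) N Hs ltac:(lia) ltac:(lia) ltac:(lia)).
  replace (S N - (n + 1))%nat with n in F by lia; rewrite INR_N_half in F; lra.
Qed.

(* With [n] values inside and [n] outside, no inner edge forces no outer edge either. *)
Lemma free_window_alternates s a : is_perm N s -> (1 <= a <= n + 1)%nat ->
  inner_edges N s a (a + n - 1) = 0 ->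
  forall t, (1 <= t <= N)%nat ->
    in_range a (a + n - 1) (s (nxt N t)) = negb (in_range a (a + n - 1) (s t)).
Proof.
  intros Hs Ha I t Ht.
  assert (F := inner_sub_outer_edges N s a (a + n - 1) Hs ltac:(lia) ltac:(lia) ltac:(lia)).
  replace (S (a + n - 1) - a)%nat with n in F by lia; rewrite INR_N_half in F.
  assert (O : outer_edges N s a (a + n - 1) = 0) by lra.
  apply sum1_indic_eq0 with (t := t) in I; [|exact Ht].
  apply sum1_indic_eq0 with (t := t) in O; [|exact Ht].
  destruct (in_range _ _ (s t)), (in_range _ _ (s (nxt N t))); simpl in *; congruence.
Qed.

(* The parity of membership in two free windows is constant along the cycle; the values
   [a] and [a'] would have different parities. *)
Lemma free_windows_unique s a a' : is_perm N s ->
  (1 <= a)%nat -> (a < a')%nat -> (a' <= n + 1)%nat -> ~ (a = 1 /\ a' = n + 1)%nat ->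
  inner_edges N s a (a + n - 1) = 0 -> inner_edges N s a' (a' + n - 1) = 0 -> False.
Proof.
  intros Hs H1 H2 H3 H4 I1 I2.
  set (parity := fun v => xorb (in_range a (a + n - 1) v) (in_range a' (a' + n - 1) v)).
  assert (P : forall t, (1 <= t <= N)%nat -> parity (s t) = parity (s 1%nat)).
  { apply cycle_invariant; intros t Ht; unfold parity.
    rewrite (free_window_alternates s a), (free_window_alternates s a') by (auto; lia).
    destruct (in_range a _ _), (in_range a' _ _); reflexivity. }
  destruct (is_perm_surj N s a Hs ltac:(lia)) as [t1 [T1 E1]].
  destruct (is_perm_surj N s a' Hs ltac:(lia)) as [t2 [T2 E2]].
  assert (P12 : parity a = parity a') by (rewrite <- E1, <- E2, (P t1 T1), (P t2 T2); reflexivity).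
  unfold parity in P12.
  replace (in_range a (a + n - 1) a) with true in P12 by (symmetry; apply in_range_true; lia).
  replace (in_range a' (a' + n - 1) a) with false in P12 by (symmetry; apply in_range_false; lia).
  replace (in_range a (a + n - 1) a') with true in P12 by (symmetry; apply in_range_true; lia).
  replace (in_range a' (a' + n - 1) a') with true in P12 by (symmetry; apply in_range_true; lia).
  discriminate.
Qed.

(* Two windows avoided by [h] are equal or the two halves; in both cases a cycle avoiding
   the first avoids the second. *)
Lemma free_window_transfer h s a a0 : is_perm N h -> is_perm N s ->
  (1 <= a <= n + 1)%nat -> (1 <= a0 <= n + 1)%nat ->
  inner_edges N h a (a + n - 1) = 0 -> inner_edges N h a0 (a0 + n - 1) = 0 ->
  inner_edges N s a0 (a0 + n - 1) = 0 -> inner_edges N s a (a + n - 1) = 0.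
Proof.
  intros Hh Hs Ha Ha0 Ih Ih0 Is0.
  assert (Halves := inner_edges_halves s Hs).
  destruct (Nat.lt_total a a0) as [Hlt|[<-|Hgt]]; [| exact Is0 |].
  - destruct (classic (a = 1 /\ a0 = n + 1)%nat) as [[-> ->]|Hc].
    + replace (1 + n - 1)%nat with n by lia; replace (n + 1 + n - 1)%nat with N in Is0 by lia.
      congruence.
    + exfalso; apply (free_windows_unique h a a0); auto; lia.
  - destruct (classic (a0 = 1 /\ a = n + 1)%nat) as [[-> ->]|Hc].
    + replace (n + 1 + n - 1)%nat with N by lia; replace (1 + n - 1)%nat with n in Is0 by lia.
      congruence.
    + exfalso; apply (free_windows_unique h a0 a); auto; lia.
Qed.

End Windows.

(** * Cycles whose edges join nearly antipodal indices *)

Definition antipodal (n u v : nat) : Prop :=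
  (u + (n - 1) <= v <= u + (n + 1) \/ v + (n - 1) <= u <= v + (n + 1))%nat.

Section Antipodal.

Variables (N n : nat) (s : nat -> nat).
Hypothesis HN : N = (2 * n)%nat.
Hypothesis Hn : (2 <= n)%nat.
Hypothesis Hs : is_perm N s.
Hypothesis s_antipodal : forall t, (1 <= t <= N)%nat -> antipodal n (s t) (s (nxt N t)).

Lemma antipodal_inner_edges_short a b : (S b - a <= n - 1)%nat -> inner_edges N s a b = 0.
Proof.
  intros Hab; apply sum1_indic_eq0; intros t Ht; assert (A := s_antipodal t Ht).
  destruct (in_range a b (s t)) eqn:E1, (in_range a b (s (nxt N t))) eqn:E2; auto.
  apply in_range_true in E1, E2; unfold antipodal in A; lia.
Qed.

Lemma antipodal_outer_edges_long a b : (1 <= a)%nat -> (b <= N)%nat -> (n + 1 <= S b - a)%nat ->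
  outer_edges N s a b = 0.
Proof.
  intros Ha Hb Hab; apply sum1_indic_eq0; intros t Ht; assert (A := s_antipodal t Ht).
  destruct Hs as [Hr _]; assert (R1 := Hr t Ht); assert (R2 := Hr _ (nxt_range N t Ht)).
  destruct (in_range a b (s t)) eqn:E1, (in_range a b (s (nxt N t))) eqn:E2; auto.
  apply in_range_false in E1, E2; unfold antipodal in A; lia.
Qed.

Lemma antipodal_inner_edges_half a : inner_edges N s a (a + n - 1) <= 1.
Proof.
  apply inner_edges_le1; [lia|exact Hs|]; intros t Ht E; assert (A := s_antipodal t Ht).
  apply Bool.andb_true_iff in E; destruct E as [E1 E2]; apply in_range_true in E1, E2.
  unfold antipodal in A; lia.
Qed.

(* Intervals of fewer than [n] values contain no edge of [s], the complement of one of more than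
   [n] values contains none, and one of exactly [n] values contains at most one. *)
Lemma antipodal_inner_edges_le h a b : is_perm N h ->
  (1 <= a)%nat -> (a < b)%nat -> (b <= N)%nat ->
  ((b = a + n - 1)%nat -> inner_edges N h a b = 0 -> inner_edges N s a b = 0) ->
  inner_edges N s a b <= inner_edges N h a b.
Proof.
  intros Hh Ha Hab Hb Hwin.
  assert (Hh0 : 0 <= inner_edges N h a b) by apply sum1_indic_ge0.
  destruct (le_lt_dec (S b - a) (n - 1)) as [Short|Short].
  { rewrite antipodal_inner_edges_short by exact Short; exact Hh0. }
  destruct (le_lt_dec (n + 1) (S b - a)) as [Long|Long].
  { assert (Fs := inner_sub_outer_edges N s a b Hs ltac:(lia) ltac:(lia) Hb).
    assert (Fh := inner_sub_outer_edges N h a b Hh ltac:(lia) ltac:(lia) Hb).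
    rewrite antipodal_outer_edges_long in Fs by assumption.
    assert (0 <= outer_edges N h a b) by apply sum1_indic_ge0.
    lra. }
  assert (Eb : b = (a + n - 1)%nat) by lia.
  destruct (sum1_indic_eq0_or_ge1 N (fun t => in_range a b (h t) && in_range a b (h (nxt N t))))
    as [Free|Busy].
  - rewrite (Hwin Eb Free); exact Hh0.
  - rewrite Eb at 1; pose proof (antipodal_inner_edges_half a).
    change (1 <= inner_edges N h a b) in Busy; lra.
Qed.

Lemma antipodal_cost_le r p h : p < 0 ->
  (forall i j, (1 <= i)%nat -> (i < j)%nat -> (j <= N)%nat -> r i < r j) ->
  is_perm N h ->
  (forall a, (1 <= a <= n + 1)%nat ->
    inner_edges N h a (a + n - 1) = 0 -> inner_edges N s a (a + n - 1) = 0) ->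
  cost N r p s <= cost N r p h.
Proof.
  intros hp r_incr Hh Hwin.
  assert (W_sym : forall u v, weight r p u v = weight r p v u).
  { intros u v; unfold weight; rewrite Rabs_minus_sym; reflexivity. }
  unfold cost; rewrite !(cycle_sum_monge N (weight r p) W_sym) by (apply Hs || apply Hh).
  apply lsum_le; intros a Ha; apply lsum_le; intros b Hb; apply in_seq in Ha, Hb.
  destruct (le_lt_dec b a) as [Hba|Hab].
  { rewrite !inner_edges_empty by (auto; lia); lra. }
  apply Rmult_le_compat_l.
  - apply (monge_dist_ge0 N (fun d => Rpower d p)); auto; try lia.
    + intros; apply Rlt_le, exp_pos.
    + intros; apply Rpower_neg_antitone; auto.
    + intros; apply Rpower_neg_diff_antitone; auto.
  - apply antipodal_inner_edges_le; auto; try lia.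
    intros Eb; subst b; apply Hwin; lia.
Qed.

End Antipodal.

(** * The cycles [h[sigma_k]] *)

Section SigmaK.

Variables (N n : nat).
Hypothesis HN : N = (2 * n)%nat.
Hypothesis Hn : (2 <= n)%nat.

Lemma sigma0_cases i : (1 <= i <= N)%nat ->
  (i = 1 /\ sigma0 N i = 1)%nat \/
  (2 <= i <= n + 1 /\ Nat.Even i /\ sigma0 N i = n + 3 - i)%nat \/
  (3 <= i <= n + 1 /\ Nat.Odd i /\ sigma0 N i = N + 3 - i)%nat \/
  (n + 2 <= i /\ Nat.Even i /\ sigma0 N i = i - n)%nat \/
  (n + 2 <= i /\ Nat.Odd i /\ sigma0 N i = i)%nat.
Proof.
  intros Hi; assert (Hd : (N / 2 = n)%nat) by (rewrite HN, Nat.mul_comm; apply Nat.div_mul; lia).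
  unfold sigma0; rewrite Hd.
  destruct (Nat.Even_or_Odd i) as [[q Hq]|[q Hq]]; subst i;
    [rewrite Nat.even_even|rewrite Nat.even_odd]; case_nat_tests.
  all: first
    [ left; lia
    | right; left; split; [lia|split; [exists q; lia|lia]]
    | right; right; left; split; [lia|split; [exists q; lia|lia]]
    | right; right; right; left; split; [lia|split; [exists q; lia|lia]]
    | right; right; right; right; split; [lia|split; [exists q; lia|lia]] ].
Qed.

Ltac sigma0_cases i :=
  let H := fresh "Hsig" in
  destruct (sigma0_cases i ltac:(lia)) as
    [[? H]|[[? [[? ?] H]]|[[? [[? ?] H]]|[[? [[? ?] H]]|[? [[? ?] H]]]]]]; rewrite H in *.

Lemma sigma0_is_perm : is_perm N (sigma0 N).
Proof.
  split.
  - intros i Hi; sigma0_cases i; lia.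
  - intros i j Hi Hj; sigma0_cases i; sigma0_cases j; intros; lia.
Qed.

Lemma sigma0_antipodal t : (1 <= t <= N)%nat -> antipodal n (sigma0 N t) (sigma0 N (nxt N t)).
Proof.
  intros Ht; unfold antipodal, nxt; destruct (Nat.eqb_spec t N).
  - subst t; sigma0_cases N; sigma0_cases 1%nat; lia.
  - sigma0_cases t; sigma0_cases (S t); lia.
Qed.

Lemma sigma0_no_edge t : (1 <= t <= N)%nat ->
  ~ (sigma0 N t = 2 /\ sigma0 N (nxt N t) = n + 1)%nat /\
  ~ (sigma0 N t = n + 1 /\ sigma0 N (nxt N t) = 2)%nat.
Proof.
  intros Ht; unfold nxt; destruct (Nat.eqb_spec t N).
  - subst t; sigma0_cases N; sigma0_cases 1%nat; lia.
  - sigma0_cases t; sigma0_cases (S t); lia.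
Qed.

Lemma iter_tau k v : (1 <= v <= N)%nat -> (k <= N)%nat ->
  Nat.iter k (tau N) v = if (v + k <=? N)%nat then (v + k)%nat else (v + k - N)%nat.
Proof.
  intros Hv; induction k as [|k IH]; intros Hk.
  - simpl; case_nat_tests; lia.
  - simpl Nat.iter; rewrite IH by lia; unfold tau, nxt; case_nat_tests; lia.
Qed.

Lemma rotation_is_perm k : (k <= N)%nat -> is_perm N (Nat.iter k (tau N)).
Proof.
  intros Hk; split.
  - intros i Hi; rewrite iter_tau by lia; case_nat_tests; lia.
  - intros i j Hi Hj; rewrite !iter_tau by lia; case_nat_tests; lia.
Qed.

Lemma sigma_k_is_perm k : (k <= N)%nat -> is_perm N (sigma_k N k).
Proof.
  intros Hk; exact (is_perm_comp N _ _ (rotation_is_perm k Hk) sigma0_is_perm).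
Qed.

Lemma sigma_k_antipodal k t : (k <= N)%nat -> (1 <= t <= N)%nat ->
  antipodal n (sigma_k N k t) (sigma_k N k (nxt N t)).
Proof.
  intros Hk Ht; unfold sigma_k.
  assert (A := sigma0_antipodal t Ht).
  destruct sigma0_is_perm as [Hr _].
  assert (R1 := Hr t Ht); assert (R2 := Hr _ (nxt_range N t Ht)).
  revert A R1 R2; generalize (sigma0 N t) (sigma0 N (nxt N t)); intros u v A R1 R2.
  rewrite !iter_tau by lia; unfold antipodal in *; case_nat_tests; lia.
Qed.

(* The rotation carrying [2] to [a0], hence [n + 1] to [a0 + n - 1]. *)
Definition window_shift (a0 : nat) : nat :=
  if (a0 =? 1)%nat then (N - 1)%nat else if (a0 =? 2)%nat then N else (a0 - 2)%nat.

Lemma window_shift_range a0 : (1 <= a0 <= n + 1)%nat -> (1 <= window_shift a0 <= N)%nat.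
Proof. intros; unfold window_shift; case_nat_tests; lia. Qed.

Lemma sigma_k_window_free a0 : (1 <= a0 <= n + 1)%nat ->
  inner_edges N (sigma_k N (window_shift a0)) a0 (a0 + n - 1) = 0.
Proof.
  intros Ha0; apply sum1_indic_eq0; intros t Ht.
  assert (K := window_shift_range a0 Ha0).
  assert (A := sigma_k_antipodal (window_shift a0) t ltac:(lia) Ht).
  assert (M : ~ (sigma_k N (window_shift a0) t = a0 /\
                 sigma_k N (window_shift a0) (nxt N t) = a0 + n - 1)%nat /\
              ~ (sigma_k N (window_shift a0) t = a0 + n - 1 /\
                 sigma_k N (window_shift a0) (nxt N t) = a0)%nat).
  { unfold sigma_k; assert (E := sigma0_no_edge t Ht).
    destruct sigma0_is_perm as [Hr _].
    assert (R1 := Hr t Ht); assert (R2 := Hr _ (nxt_range N t Ht)).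
    revert E R1 R2 K; generalize (sigma0 N t) (sigma0 N (nxt N t)); intros u v E R1 R2 K.
    rewrite !iter_tau by lia; unfold window_shift in *; case_nat_tests; lia. }
  destruct (in_range _ _ (sigma_k N _ t)) eqn:E1, (in_range _ _ (sigma_k N _ (nxt N t))) eqn:E2;
    auto.
  apply in_range_true in E1, E2; exfalso; unfold antipodal in A; lia.
Qed.

End SigmaK.

Lemma exists_argmin (f : nat -> R) N : (1 <= N)%nat ->
  exists k, (1 <= k <= N)%nat /\ forall j, (1 <= j <= N)%nat -> f k <= f j.
Proof.
  induction N as [|N IH]; intros HN; [lia|].
  destruct (Nat.eq_dec N 0) as [->|HN0].
  { exists 1%nat; split; [lia|]; intros j Hj; replace j with 1%nat by lia; lra. }
  destruct (IH ltac:(lia)) as [k [Hk Hmin]].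
  destruct (Rle_lt_dec (f k) (f (S N))).
  - exists k; split; [lia|]; intros j Hj.
    destruct (Nat.eq_dec j (S N)) as [->|]; [assumption|apply Hmin; lia].
  - exists (S N); split; [lia|]; intros j Hj.
    destruct (Nat.eq_dec j (S N)) as [->|]; [lra|specialize (Hmin j ltac:(lia)); lra].
Qed.

(* If [h] avoids some window [a0], the rotation of [sigma] avoiding [a0] beats it;
   otherwise any rotation does. *)
Lemma sigma_k_beats N n r p h : N = (2 * n)%nat -> (2 <= n)%nat -> p < 0 ->
  (forall i j, (1 <= i)%nat -> (i < j)%nat -> (j <= N)%nat -> r i < r j) ->
  is_perm N h ->
  exists k, (1 <= k <= N)%nat /\ cost N r p (sigma_k N k) <= cost N r p h.
Proof.
  intros HN Hn hp r_incr Hh.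
  assert (Hbeat : forall k, (1 <= k <= N)%nat ->
    (forall a, (1 <= a <= n + 1)%nat -> inner_edges N h a (a + n - 1) = 0 ->
      inner_edges N (sigma_k N k) a (a + n - 1) = 0) ->
    exists k, (1 <= k <= N)%nat /\ cost N r p (sigma_k N k) <= cost N r p h).
  { intros k Hk Hwin; exists k; split; [exact Hk|].
    apply (antipodal_cost_le N n (sigma_k N k) HN Hn (sigma_k_is_perm N n HN Hn k ltac:(lia)));
      auto.
    intros t Ht; apply (sigma_k_antipodal N n HN Hn); lia. }
  destruct (classic (exists a0, (1 <= a0 <= n + 1)%nat /\ inner_edges N h a0 (a0 + n - 1) = 0))
    as [[a0 [Ha0 Ih0]]|Hnone].
  - apply (Hbeat (window_shift N a0) (window_shift_range N n HN Hn a0 Ha0)).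
    intros a Ha Ih; apply (free_window_transfer N n HN Hn h _ a a0); auto.
    + apply (sigma_k_is_perm N n HN Hn).
      pose proof (window_shift_range N n HN Hn a0 Ha0); lia.
    + apply (sigma_k_window_free N n HN Hn a0 Ha0).
  - apply (Hbeat N ltac:(lia)).
    intros a Ha Ih; exfalso; apply Hnone; eauto.
Qed.

Theorem proposition4 (N : nat) (p : R) (r : nat -> R)
  (hN4 : (4 <= N)%nat) (hNeven : Nat.Even N) (hp : p < 0)
  (hr0 : 0 <= r 1%nat) (hr1 : r N <= 1)
  (hmono : forall i j : nat, (1 <= i)%nat -> (i < j)%nat -> (j <= N)%nat -> r i < r j) :
  exists k : nat, (1 <= k <= N)%nat /\
    forall h : nat -> nat, is_perm N h -> cost N r p (sigma_k N k) <= cost N r p h.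
Proof.
  destruct hNeven as [n HN].
  destruct (exists_argmin (fun k => cost N r p (sigma_k N k)) N ltac:(lia)) as [k [Hk Hmin]].
  exists k; split; [exact Hk|]; intros h Hh.
  destruct (sigma_k_beats N n r p h HN ltac:(lia) hp hmono Hh) as [k' [Hk' Hle]].
  specialize (Hmin k' Hk'); simpl in Hmin; lra.
Qed.
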